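(* Let $N\ge1$, $\sigma\ge0$, and let $(x_i(t),v_i(t))_{i=1}^N$, $t\ge0$, be a solution of $$\dot x_i=v_i,\qquad \dot v_i=-\frac{\|v_i\|^2}{\|x_i\|^2}x_i+\sum_{j=1}^N\frac{\psi_{ij}}{N}\big(R(x_j,x_i)v_j-v_i\big)+\sum_{k=1}^N\frac{\sigma}{N}\big(\|x_i\|^2x_k-\langle x_i,x_k\rangle x_i\big),$$ with initial data satisfying $\|x_i(0)\|=1$ and $\langle v_i(0),x_i(0)\rangle=0$ for all $i$, where the $\psi_{ij}$ are nonnegative bounded functions with $\psi_{ij}=\psi_{ji}$ for all $i,j$. Then $$\frac{d\mathcal{E}}{dt}=-\sum_{i,j=1}^N\frac{\psi_{ij}}{N^2}\big\|R(x_j,x_i)v_j-v_i\big\|^2,$$ and for all $t\ge0$, $$\mathcal{V}(t):=\max_{1\le i\le N}\|v_i(t)\|\le\sqrt{N\mathcal{E}(0)}.$$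
   Context: $\|\cdot\|$ is the Euclidean norm and $\langle\cdot,\cdot\rangle$ the standard inner product on $\mathbb{R}^3$. For column vectors $x_1,x_2\in\mathbb{S}^2$ with $x_1\neq -x_2$: $R(x_1,x_2)=I$ if $x_1=x_2$, and otherwise $R(x_1,x_2)=\langle x_1,x_2\rangle I-x_1x_2^T+x_2x_1^T+(1-\langle x_1,x_2\rangle)uu^T$ with $u=\frac{x_1\times x_2}{\|x_1\times x_2\|}$. When $x_j=-x_i$, the terms $\psi_{ij}R(x_j,x_i)v_j$ and $\psi_{ij}\|R(x_j,x_i)v_j-v_i\|^2$ are taken to be $0$. The energy is $\mathcal{E}=\mathcal{E}_K+\mathcal{E}_C$ with $\mathcal{E}_K(t)=\frac1N\sum_{k=1}^N\|v_k(t)\|^2$ and $\mathcal{E}_C(t)=\frac{\sigma}{2N^2}\sum_{k,l=1}^N\|x_k(t)-x_l(t)\|^2$. *)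

From HB Require Import structures.
From mathcomp Require Import all_boot all_order all_algebra.
From mathcomp Require Import all_classical all_reals all_analysis.
Set Implicit Arguments. Unset Strict Implicit. Unset Printing Implicit Defensive.
Import Order.TTheory GRing.Theory Num.Theory.
Import numFieldNormedType.Exports.
Local Open Scope ring_scope.

Section Defs.
Variable R : realType.

Definition dot3 (x y : 'cV[R]_3) : R := \sum_(k < 3) x k 0 * y k 0.
Definition norm3 (x : 'cV[R]_3) : R := Num.sqrt (dot3 x x).

Definition cross3 (x y : 'cV[R]_3) : 'cV[R]_3 :=
  let x0 := x (inord 0) 0 in let x1 := x (inord 1) 0 in let x2 := x (inord 2) 0 in
  let y0 := y (inord 0) 0 in let y1 := y (inord 1) 0 in let y2 := y (inord 2) 0 in
  \col_(k < 3) nth 0 [:: x1 * y2 - x2 * y1; x2 * y0 - x0 * y2; x0 * y1 - x1 * y0] k.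

Definition Rot (x1 x2 : 'cV[R]_3) : 'M[R]_3 :=
  if x1 == x2 then 1%:M else
  let u := (norm3 (cross3 x1 x2))^-1 *: cross3 x1 x2 in
  (dot3 x1 x2)%:M - x1 *m x2^T + x2 *m x1^T + (1 - dot3 x1 x2) *: (u *m u^T).

(* psi_ij R(x_j,x_i) v_j - ... with the convention: 0 when x_j = - x_i *)
Definition align_term (p : R) (xj xi vj vi : 'cV[R]_3) : 'cV[R]_3 :=
  if xj == - xi then 0 else p *: (Rot xj xi *m vj - vi).

Definition dissip_term (p : R) (xj xi vj vi : 'cV[R]_3) : R :=
  if xj == - xi then 0 else p * norm3 (Rot xj xi *m vj - vi) ^+ 2.

Variable N : nat.

Definition rhs_v (sigma : R) (psi : 'I_N -> 'I_N -> R -> R)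
    (x v : 'I_N -> R -> 'cV[R]_3) (i : 'I_N) (t : R) : 'cV[R]_3 :=
  - ((norm3 (v i t) ^+ 2 / norm3 (x i t) ^+ 2) *: x i t)
  + \sum_(j < N) align_term (psi i j t / N%:R) (x j t) (x i t) (v j t) (v i t)
  + \sum_(k < N) (sigma / N%:R) *:
       (norm3 (x i t) ^+ 2 *: x k t - dot3 (x i t) (x k t) *: x i t).

Definition energy (sigma : R) (x v : 'I_N -> R -> 'cV[R]_3) (t : R) : R :=
  N%:R^-1 * \sum_(k < N) norm3 (v k t) ^+ 2
  + sigma / (2 * N%:R ^+ 2) * \sum_(k < N) \sum_(l < N) norm3 (x k t - x l t) ^+ 2.

Definition energy_rate (psi : 'I_N -> 'I_N -> R -> R)
    (x v : 'I_N -> R -> 'cV[R]_3) (t : R) : R :=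
  - \sum_(i < N) \sum_(j < N)
      dissip_term (psi i j t / N%:R ^+ 2) (x j t) (x i t) (v j t) (v i t).

Definition Vmax (v : 'I_N -> R -> 'cV[R]_3) (t : R) : R :=
  \big[Num.max/0]_(i < N) norm3 (v i t).

End Defs.

(* The constraints |x_i| = 1 and <x_i, v_i> = 0 propagate: the defect
   G = sum_i (<x_i, v_i>^2 + (|x_i|^2 - 1)^2) vanishes at time 0, and as long as G <= 1/4
   (which keeps x_i away from 0) the equations give G' <= K G, so G = 0 by a Gronwall
   argument.  On the sphere R(x_j, x_i) is an isometry, hence
   -|R v_j - v_i|^2 = 2 <v_i, R v_j - v_i> + |v_i|^2 - |v_j|^2, and the last two terms
   cancel after summation because psi is symmetric; the cohesion terms of the kinetic and
   potential energies cancel because <x_i, v_i> = 0.  So E' <= 0 and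
   |v_i|^2 <= N E(t) <= N E(0). *)

From HB Require Import structures.
From mathcomp Require Import all_boot all_order all_algebra.
From mathcomp Require Import all_classical all_reals all_analysis.
From mathcomp Require Import ring lra.
Import Order.TTheory GRing.Theory Num.Theory.
Import numFieldNormedType.Exports.
Local Open Scope ring_scope.
Local Open Scope classical_set_scope.
Set Implicit Arguments. Unset Strict Implicit. Unset Printing Implicit Defensive.

Section Dot3.
Variable R : realType.
Implicit Types (x y z w : 'cV[R]_3) (a : R).

Lemma dot3C x y : dot3 x y = dot3 y x.
Proof. by apply: eq_bigr => k _; rewrite mulrC. Qed.

Lemma dot3Dl x y z : dot3 (x + y) z = dot3 x z + dot3 y z.
Proof. by rewrite /dot3 -big_split; apply: eq_bigr => k _; rewrite !mxE mulrDl. Qed.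

Lemma dot3Dr x y z : dot3 z (x + y) = dot3 z x + dot3 z y.
Proof. by rewrite dot3C dot3Dl !(dot3C z). Qed.

Lemma dot3Zl a x y : dot3 (a *: x) y = a * dot3 x y.
Proof. by rewrite /dot3 mulr_sumr; apply: eq_bigr => k _; rewrite !mxE mulrA. Qed.

Lemma dot3Zr a x y : dot3 y (a *: x) = a * dot3 y x.
Proof. by rewrite dot3C dot3Zl dot3C. Qed.

Lemma dot3Nl x y : dot3 (- x) y = - dot3 x y.
Proof. by rewrite -scaleN1r dot3Zl mulN1r. Qed.

Lemma dot3Nr x y : dot3 y (- x) = - dot3 y x.
Proof. by rewrite -scaleN1r dot3Zr mulN1r. Qed.

Lemma dot3Bl x y z : dot3 (x - y) z = dot3 x z - dot3 y z.
Proof. by rewrite dot3Dl dot3Nl. Qed.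

Lemma dot3Br x y z : dot3 z (x - y) = dot3 z x - dot3 z y.
Proof. by rewrite dot3Dr dot3Nr. Qed.

Lemma dot30r x : dot3 x 0 = 0.
Proof. by rewrite /dot3 big1 // => k _; rewrite mxE mulr0. Qed.

Lemma dot3_sumr n (f : 'I_n -> 'cV[R]_3) y :
  dot3 y (\sum_(j < n) f j) = \sum_(j < n) dot3 y (f j).
Proof.
rewrite /dot3 exchange_big /=; apply: eq_bigr => k _.
by rewrite summxE mulr_sumr.
Qed.

Lemma dot3_ge0 x : 0 <= dot3 x x.
Proof. by rewrite /dot3 sumr_ge0 // => k _; rewrite -expr2 sqr_ge0. Qed.

Lemma norm3_sq x : norm3 x ^+ 2 = dot3 x x.
Proof. by rewrite /norm3 sqr_sqrtr // dot3_ge0. Qed.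

Lemma dot3_eq0 x : (dot3 x x == 0) = (x == 0).
Proof.
apply/idP/eqP => [/eqP x0|->]; last by rewrite dot30r.
apply/matrixP => i j; rewrite ord1 mxE; apply/eqP; rewrite -sqrf_eq0 expr2.
by move/psumr_eq0P : x0 => -> // k _; rewrite -expr2 sqr_ge0.
Qed.

Lemma trmx_mul_dot3 x y : x^T *m y = (dot3 x y)%:M.
Proof.
apply/matrixP => i j; rewrite !ord1 !mxE /dot3 /=.
by apply: eq_bigr => k _; rewrite !mxE.
Qed.

Lemma mul_outer_mx x y w : (x *m y^T) *m w = dot3 y w *: x.
Proof. by rewrite -mulmxA trmx_mul_dot3 mul_mx_scalar. Qed.

Lemma dot3E x y :
  dot3 x y = x (inord 0) 0 * y (inord 0) 0 + x (inord 1) 0 * y (inord 1) 0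
             + x (inord 2) 0 * y (inord 2) 0.
Proof.
rewrite /dot3 !big_ord_recl big_ord0 addr0 addrA.
by congr (_ * _ + _ * _ + _ * _); congr (_ _ 0); apply/val_inj; rewrite /= inordK.
Qed.

Lemma cross3E x y :
  [/\ cross3 x y (inord 0) 0 = x (inord 1) 0 * y (inord 2) 0 - x (inord 2) 0 * y (inord 1) 0,
      cross3 x y (inord 1) 0 = x (inord 2) 0 * y (inord 0) 0 - x (inord 0) 0 * y (inord 2) 0 &
      cross3 x y (inord 2) 0 = x (inord 0) 0 * y (inord 1) 0 - x (inord 1) 0 * y (inord 0) 0].
Proof. by rewrite /cross3 !mxE !inordK. Qed.

Lemma dot3_cross3l x y : dot3 x (cross3 x y) = 0.
Proof. by rewrite dot3E; have [-> -> ->] := cross3E x y; ring. Qed.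

Lemma dot3_cross3r x y : dot3 y (cross3 x y) = 0.
Proof. by rewrite dot3E; have [-> -> ->] := cross3E x y; ring. Qed.

Lemma lagrange_identity x y :
  dot3 (cross3 x y) (cross3 x y) = dot3 x x * dot3 y y - dot3 x y ^+ 2.
Proof. by rewrite !dot3E; have [-> -> ->] := cross3E x y; ring. Qed.

Lemma dot3_cross3_sq x y w : dot3 (cross3 x y) w ^+ 2 =
  dot3 w w * (dot3 x x * dot3 y y - dot3 x y ^+ 2) - dot3 y y * dot3 x w ^+ 2
  - dot3 x x * dot3 y w ^+ 2 + 2 * dot3 x y * dot3 x w * dot3 y w.
Proof. by rewrite !dot3E; have [-> -> ->] := cross3E x y; ring. Qed.

End Dot3.

Section Rotation.
Variable R : realType.
Implicit Types (x y w : 'cV[R]_3).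

Let axis x y : 'cV[R]_3 := (norm3 (cross3 x y))^-1 *: cross3 x y.

Lemma mul_RotE x y w : x != y ->
  Rot x y *m w = dot3 x y *: w - dot3 y w *: x + dot3 x w *: y
     + ((1 - dot3 x y) * dot3 (axis x y) w) *: axis x y.
Proof.
move=> /negPf xy; rewrite /Rot xy -/(axis x y).
by rewrite !mulmxDl mulNmx mul_scalar_mx -scalemxAl !mul_outer_mx scalerA.
Qed.

Lemma dot3_Rot x y w :
  dot3 y (Rot x y *m w) = if x == y then dot3 x w else dot3 y y * dot3 x w.
Proof.
have [->|xy] := eqVneq x y; first by rewrite /Rot eqxx mul1mx.
rewrite mul_RotE // !(dot3Dr, dot3Nr, dot3Zr) dot3_cross3r (dot3C y x); ring.
Qed.

Lemma cross3_neq0 x y : dot3 x x = 1 -> dot3 y y = 1 -> x != y -> x != - y ->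
  dot3 (cross3 x y) (cross3 x y) != 0.
Proof.
move=> x1 y1 xy xNy; rewrite lagrange_identity x1 y1 mul1r subr_eq0.
apply: contra_neq xy => c1; set c := dot3 x y in c1.
(* [x - c y] has squared length [1 - c^2 = 0] *)
have /eqP : x - c *: y == 0.
  rewrite -dot3_eq0 !(dot3Dl, dot3Nl, dot3Zl, dot3Dr, dot3Nr, dot3Zr).
  by rewrite x1 y1 (dot3C y x) -/c; apply/eqP; nra.
move/subr0_eq => xE.
have /orP[/eqP c_1|/eqP c_N1] : (c == 1) || (c == -1) by rewrite -sqrf_eq1 -c1.
- by rewrite xE c_1 scale1r.
- by move: xNy; rewrite xE c_N1 scaleN1r eqxx.
Qed.

Lemma Rot_isometry x y w : dot3 x x = 1 -> dot3 y y = 1 -> x != - y ->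
  dot3 (Rot x y *m w) (Rot x y *m w) = dot3 w w.
Proof.
move=> x1 y1 xNy; have [->|xy] := eqVneq x y; first by rewrite /Rot eqxx mul1mx.
have cross2 : dot3 (cross3 x y) (cross3 x y) = 1 - dot3 x y ^+ 2.
  by rewrite lagrange_identity x1 y1 mul1r.
have scale2 : (norm3 (cross3 x y))^-1 ^+ 2 * (1 - dot3 x y ^+ 2) = 1.
  by rewrite exprVn norm3_sq -cross2 mulVf // cross3_neq0.
have uu : dot3 (axis x y) (axis x y) = 1.
  by rewrite /axis dot3Zl dot3Zr mulrA -expr2 cross2 scale2.
have xu : dot3 x (axis x y) = 0 by rewrite /axis dot3Zr dot3_cross3l mulr0.
have yu : dot3 y (axis x y) = 0 by rewrite /axis dot3Zr dot3_cross3r mulr0.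
have uw : dot3 (axis x y) w ^+ 2 * (1 - dot3 x y ^+ 2) =
    dot3 w w * (1 - dot3 x y ^+ 2) - dot3 x w ^+ 2 - dot3 y w ^+ 2
    + 2 * dot3 x y * dot3 x w * dot3 y w.
  by rewrite /axis dot3Zl exprMn mulrAC scale2 mul1r dot3_cross3_sq x1 y1; ring.
rewrite mul_RotE //; move: uu xu yu uw; move: (axis x y) => u uu xu yu uw.
rewrite !(dot3Dl, dot3Nl, dot3Zl, dot3Dr, dot3Nr, dot3Zr).
rewrite uu x1 y1 !(dot3C u) xu yu (dot3C y x) (dot3C w x) (dot3C w y) (dot3C w u).
lra.
Qed.

End Rotation.

Section PointwiseCalculus.
Variable R : realType.
Implicit Types (f g : R -> R) (t : R).

Lemma is_derive_mul f g df dg t : is_derive t 1 f df -> is_derive t 1 g dg ->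
  is_derive t 1 (fun s => f s * g s) (f t * dg + g t * df).
Proof. exact: is_deriveM. Qed.

Lemma is_derive_bigsum n (h : 'I_n -> R -> R) dh t :
  (forall i, is_derive t 1 (h i) (dh i)) ->
  is_derive t 1 (fun s => \sum_(i < n) h i s) (\sum_(i < n) dh i).
Proof.
move=> hd; have := is_derive_sum hd.
by have -> : \sum_(i < n) h i = (fun s => \sum_(i < n) h i s) by apply/funext => s; rewrite fct_sumE.
Qed.

Lemma is_derive_dot3 (f g : R -> 'cV[R]_3) (df dg : 'cV[R]_3) t :
  (forall k, is_derive t 1 (fun s => f s k 0) (df k 0)) ->
  (forall k, is_derive t 1 (fun s => g s k 0) (dg k 0)) ->
  is_derive t 1 (fun s => dot3 (f s) (g s)) (dot3 df (g t) + dot3 (f t) dg).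
Proof.
move=> fd gd; apply: is_derive_eq.
  exact: (is_derive_bigsum (fun k => is_derive_mul (fd k) (gd k))).
by rewrite -big_split; apply: eq_bigr => k _; rewrite addrC mulrC.
Qed.

Variable A : set R.

Lemma within_continuousM f g : {within A, continuous f} -> {within A, continuous g} ->
  {within A, continuous (fun s => f s * g s)}.
Proof. by move=> fc gc t; apply: cvgM; [exact: fc | exact: gc]. Qed.

Lemma within_continuous_bigsum n (h : 'I_n -> R -> R) :
  (forall i, {within A, continuous h i}) ->
  {within A, continuous (fun s => \sum_(i < n) h i s)}.
Proof. by move=> hc t; apply: cvg_big => // [|i _]; [exact: add_continuous | exact: hc]. Qed.

Lemma within_continuous_dot3 (f g : R -> 'cV[R]_3) :
  (forall k, {within A, continuous (fun s => f s k 0)}) ->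
  (forall k, {within A, continuous (fun s => g s k 0)}) ->
  {within A, continuous (fun s => dot3 (f s) (g s))}.
Proof.
by move=> fc gc; apply: within_continuous_bigsum => k; apply: within_continuousM.
Qed.

End PointwiseCalculus.

Arguments within_continuousM {R A f g} _ _ _ _ _.
Arguments within_continuous_dot3 {R A f g} _ _ _ _ _.

Section Gronwall.
Variable R : realType.
Implicit Types (g dg : R -> R) (K a b t : R).

Lemma is_derive_le0_le (f df : R -> R) a b : a <= b -> {within `[a, b], continuous f} ->
  (forall t, t \in `]a, b[%R -> is_derive t 1 f (df t)) ->
  (forall t, t \in `]a, b[%R -> df t <= 0) -> f b <= f a.
Proof.
move=> ab fc fd df0.
have fdv t : t \in `]a, b[%R -> derivable f t 1 by move=> /fd; case.
have f'0 t : t \in `]a, b[%R -> f^`() t <= 0.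
  by move=> tab; rewrite derive1E (@derive_val _ _ _ _ _ _ _ (fd t tab)) df0.
by have := ler0_derive1_le_cc fdv f'0 fc; apply; rewrite ?bound_itvE.
Qed.

Lemma expR_weighted_le g dg K a b : a <= b -> {within `[a, b], continuous g} ->
  (forall t, t \in `]a, b[%R -> is_derive t 1 g (dg t)) ->
  (forall t, t \in `]a, b[%R -> dg t <= K * g t) ->
  expR (- K * b) * g b <= expR (- K * a) * g a.
Proof.
move=> ab gc gd dgK.
have ed t : is_derive t 1 (fun s => expR (- K * s)) (expR (- K * t) * - K).
  have lin : is_derive t 1 (fun s => - K * s) (- K).
    by have := is_derive_mul (is_derive_cst (- K) t 1) (is_derive_id t 1); rewrite mulr1 mulr0 addr0.
  exact: is_derive1_comp (is_derive_expR _) lin.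
apply: (is_derive_le0_le (f := fun t => expR (- K * t) * g t)
  (df := fun t => expR (- K * t) * (dg t - K * g t))) => //.
- move=> t; apply: cvgM; last exact: gc.
  apply: continuous_subspaceT => s; apply: continuous_comp; last exact: continuous_expR.
  by apply: cvgM; [exact: cvg_cst | exact: cvg_id].
- move=> t tab; apply: is_derive_eq; first exact: is_derive_mul (ed t) (gd t tab).
  by rewrite /=; ring.
- move=> t tab; rewrite pmulr_rle0 ?expR_gt0 // subr_le0; exact: dgK.
Qed.

Lemma within_continuous_dist_lt (A : set R) g s : {within A, continuous g} -> A s ->
  forall e, 0 < e -> exists2 r, 0 < r & forall u, A u -> `|s - u| < r -> `|g s - g u| < e.
Proof.
move=> gc As e e0; have : within A (nbhs s) (fun u => `|g s - g u| < e).
  by rewrite nbhs_subspace_in //; move/cvgrPdist_lt : (gc s); apply.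
move=> /nbhs_ballP[r /= r0 gr].
by exists r => // u Au su; apply: gr.
Qed.

Lemma local_gronwall_eq0 g dg K d : 0 < d ->
  {within [set t | 0 <= t], continuous g} -> g 0 = 0 ->
  (forall t, 0 <= t -> 0 <= g t) ->
  (forall t, 0 < t -> is_derive t 1 g (dg t)) ->
  (forall t, 0 < t -> g t <= d -> dg t <= K * g t) ->
  forall t, 0 <= t -> g t = 0.
Proof.
move=> d0 gc g0 g_ge0 gd dgK t1 t10.
apply/eqP; rewrite eq_le g_ge0 // andbT leNgt; apply/negP => g1.
pose Z := [set t | 0 <= t <= t1 /\ g t = 0].
have Z0 : Z 0 by split; rewrite ?lexx ?t10.
have supZ : has_sup Z by split; [exists 0 | exists t1 => u [/andP[]]].
set s := sup Z; have Zs u : Z u -> u <= s by move=> Zu; exact: sup_upper_bound.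
have s0 : 0 <= s by exact: Zs.
(* if [g s > 0], then [g > 0] on a neighbourhood of [s], which contains points of [Z] *)
have gs : g s = 0.
  apply/eqP; rewrite eq_le g_ge0 // andbT leNgt; apply/negP => gs.
  have [e e0 ge] := within_continuous_dist_lt gc s0 gs.
  have [u Zu su] := sup_adherent e0 supZ; have [/andP[u0 _] gu] := Zu.
  suff : `|s - u| < e by move/(ge u u0); rewrite gu subr0 (gtr0_norm gs) ltxx.
  by rewrite ger0_norm ?subr_ge0 ?Zs //; move: su; rewrite -/s; lra.
have st1 : s < t1.
  rewrite lt_neqAle ge_sup ?andbT; [|by exists 0|by move=> u [/andP[]]].
  by apply: contraTneq g1 => <-; rewrite gs ltxx.
have [e e0 ge] := within_continuous_dist_lt gc s0 d0.
pose t2 := Num.min (s + e / 2) t1.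
have st2 : s < t2 by rewrite lt_min st1 andbT; lra.
have : expR (- K * t2) * g t2 <= expR (- K * s) * g s.
  apply: expR_weighted_le (ltW st2) _ (fun t _ => gd t _) _ => [|t|t].
  - apply: continuous_subspaceW gc => t; rewrite /= in_itv /= => /andP[st _].
    exact: le_trans st.
  - by rewrite in_itv /= => /andP[st _]; exact: le_lt_trans st.
  rewrite in_itv /= => /andP[st tt2]; apply: dgK; first exact: le_lt_trans st.
  have /ge : `|s - t| < e.
    by rewrite ltr0_norm ?subr_lt0 //; move: tt2; rewrite lt_min => /andP[]; lra.
  by rewrite gs sub0r normrN => /(_ (le_trans s0 (ltW st))) /ltW /(le_trans (ler_norm _)).
rewrite gs mulr0 pmulr_rle0 ?expR_gt0 // => gt2.
have t20 : 0 <= t2 by lra.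
have : t2 <= s by apply: Zs; split; [rewrite t20 ge_min lexx orbT | apply/le_anti; rewrite gt2 g_ge0].
lra.
Qed.

End Gronwall.

Lemma mul_alignment_le (R : realFieldType) (p q c ai aj G : R) :
  0 <= p -> p <= q -> `|c| <= 3 / 2 -> ai ^+ 2 <= G -> aj ^+ 2 <= G ->
  ai * (p * (c * aj - ai)) <= q * (3 / 2) * G.
Proof.
move=> p0 pq c32 aiG ajG.
have G0 : 0 <= G by apply: le_trans aiG; exact: sqr_ge0.
have aij : `|ai * aj| <= G.
  rewrite normrM; have := sqr_ge0 (`|ai| - `|aj|).
  by rewrite -(real_normK (num_real ai)) in aiG; rewrite -(real_normK (num_real aj)) in ajG; nra.
have caij : c * (ai * aj) <= 3 / 2 * G.
  apply: le_trans (ler_norm _) _; rewrite normrM.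
  exact: ler_pM (normr_ge0 _) (normr_ge0 _) c32 aij.
have : ai * (p * (c * aj - ai)) <= p * (3 / 2 * G).
  have := sqr_ge0 ai; have := ler_wpM2l p0 caij; nra.
by move/le_trans; apply; nra.
Qed.

Lemma sum_sym_weighted_diff (R : comPzRingType) n (w : 'I_n -> 'I_n -> R) (f : 'I_n -> R) :
  (forall i j, w i j = w j i) -> \sum_i \sum_j w i j * (f j - f i) = 0.
Proof.
move=> wC; rewrite (eq_bigr (fun i => \sum_j w i j * f j - \sum_j w i j * f i)).
  by rewrite sumrB exchange_big /=; under eq_bigr do under eq_bigr do rewrite wC; rewrite subrr.
by move=> i _; rewrite -sumrB; apply: eq_bigr => j _; rewrite mulrBr.
Qed.

Lemma sum_pairwise_diff (R : comPzRingType) n (a : 'I_n -> 'I_n -> R) :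
  \sum_k \sum_l (a k k + a l l - (a k l + a l k)) =
  2 * (n%:R * \sum_k a k k - \sum_k \sum_l a k l).
Proof.
have diag : \sum_k \sum_(l < n) a k k = n%:R * \sum_k a k k.
  by rewrite mulr_sumr; apply: eq_bigr => k _; rewrite sumr_const card_ord mulr_natl.
under eq_bigr do rewrite sumrB !big_split /=.
rewrite sumrB !big_split /= [\sum_k \sum_l a l l]exchange_big [\sum_k \sum_l a l k]exchange_big /= diag.
ring.
Qed.

Lemma sum_dot3_pairwise_diff (R : realType) n (x v : 'I_n -> 'cV[R]_3) :
  \sum_k \sum_l dot3 (x k - x l) (v k - v l) =
  2 * (n%:R * \sum_k dot3 (x k) (v k) - \sum_k \sum_l dot3 (x k) (v l)).
Proof.
rewrite -(sum_pairwise_diff (fun k l => dot3 (x k) (v l))).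
by apply: eq_bigr => k _; apply: eq_bigr => l _; rewrite dot3Bl !dot3Br; ring.
Qed.

Section Solution.
Variables (R : realType) (N : nat) (sigma M : R) (psi : 'I_N -> 'I_N -> R -> R)
  (x v : 'I_N -> R -> 'cV[R]_3).
Implicit Types (i j : 'I_N) (t : R).

Hypothesis N_gt0 : (0 < N)%N.
Hypothesis psi_ge0 : forall i j t, 0 <= t -> 0 <= psi i j t.
Hypothesis psi_leM : forall i j t, 0 <= t -> psi i j t <= M.
Hypothesis psiC : forall i j t, 0 <= t -> psi i j t = psi j i t.
Hypothesis x_cont : forall i (k : 'I_3),
  {within [set t : R | 0 <= t], continuous (fun s => x i s k 0)}.
Hypothesis v_cont : forall i (k : 'I_3),
  {within [set t : R | 0 <= t], continuous (fun s => v i s k 0)}.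
Hypothesis x_deriv : forall i (k : 'I_3) {t}, 0 < t ->
  is_derive t 1 (fun s => x i s k 0) (v i t k 0).
Hypothesis v_deriv : forall i (k : 'I_3) {t}, 0 < t ->
  is_derive t 1 (fun s => v i s k 0) (rhs_v sigma psi x v i t k 0).
Hypothesis x0_unit : forall i, norm3 (x i 0) = 1.
Hypothesis v0_tangent : forall i, dot3 (v i 0) (x i 0) = 0.

Let N_neq0 : N%:R != 0 :> R. Proof. by rewrite pnatr_eq0 -lt0n. Qed.

Definition sqnorm i t := dot3 (x i t) (x i t).
Definition radial i t := dot3 (x i t) (v i t).
Definition radial' i t := dot3 (v i t) (v i t) + dot3 (x i t) (rhs_v sigma psi x v i t).

Definition sphere_defect t :=
  \sum_i (radial i t ^+ 2 + (sqnorm i t - 1) ^+ 2).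

Definition sphere_defect' t :=
  \sum_i (2 * radial i t * radial' i t + 4 * (sqnorm i t - 1) * radial i t).

Lemma is_derive_sphere_defect t : 0 < t -> is_derive t 1 sphere_defect (sphere_defect' t).
Proof.
move=> t0; apply: is_derive_eq.
  apply: is_derive_bigsum => i.
  have da := is_derive_dot3 (fun k => x_deriv i k t0) (fun k => v_deriv i k t0).
  have dn := is_derive_dot3 (fun k => x_deriv i k t0) (fun k => x_deriv i k t0).
  have dn1 := is_deriveB dn (is_derive_cst (1 : R) t 1).
  exact: is_deriveD (is_derive_mul da da) (is_derive_mul dn1 dn1).
apply: eq_bigr => i _; rewrite /radial' /radial /sqnorm (dot3C (v i t) (x i t)) /= !fctE /cst; ring.
Qed.

Lemma radial'E i t : sqnorm i t != 0 -> radial' i t =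
  \sum_j (if x j t == - x i t then 0 else psi i j t / N%:R *
            ((if x j t == x i t then 1 else sqnorm i t) * radial j t - radial i t)).
Proof.
move=> n0; rewrite /radial' /rhs_v !dot3Dr dot3Nr dot3Zr !dot3_sumr.
have -> : \sum_k dot3 (x i t) ((sigma / N%:R) *:
       (norm3 (x i t) ^+ 2 *: x k t - dot3 (x i t) (x k t) *: x i t)) = 0.
  by apply: big1 => k _; rewrite dot3Zr dot3Br !dot3Zr norm3_sq; ring.
rewrite addr0 !norm3_sq -/(sqnorm i t) divfK // addNKr.
apply: eq_bigr => j _; rewrite /align_term; case: eqP => _; first by rewrite dot30r.
by rewrite dot3Zr dot3Br dot3_Rot; case: eqP; rewrite ?mul1r.
Qed.

Lemma sphere_defect_ge0 t : 0 <= sphere_defect t.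
Proof. by apply: sumr_ge0 => i _; rewrite addr_ge0 ?sqr_ge0. Qed.

Lemma sphere_defect_term_le i t :
  radial i t ^+ 2 + (sqnorm i t - 1) ^+ 2 <= sphere_defect t.
Proof.
rewrite /sphere_defect (bigD1 i) //= lerDl.
by apply: sumr_ge0 => j _; rewrite addr_ge0 ?sqr_ge0.
Qed.

Lemma sphere_defect'_le t : 0 < t -> sphere_defect t <= 1 / 4 ->
  sphere_defect' t <= N%:R * (3 * M + 2) * sphere_defect t.
Proof.
move=> t0 G14; have G0 := sphere_defect_ge0 t.
have M0 : 0 <= M.
  by apply: le_trans (psi_ge0 (Ordinal N_gt0) (Ordinal N_gt0) (ltW t0)) (psi_leM _ _ (ltW t0)).
have -> : N%:R * (3 * M + 2) * sphere_defect t = \sum_(i < N) ((3 * M + 2) * sphere_defect t).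
  by rewrite sumr_const card_ord -mulrA mulr_natl.
apply: ler_sum => i _.
have Gi := sphere_defect_term_le i t.
have [n_lo n_hi] : 1 / 2 <= sqnorm i t /\ sqnorm i t <= 3 / 2.
  by have := sqr_ge0 (radial i t); split; nra.
have ra' : radial i t * radial' i t <= 3 / 2 * M * sphere_defect t.
  rewrite radial'E; last by apply: lt0r_neq0; lra.
  have -> : 3 / 2 * M * sphere_defect t = \sum_(j < N) (M / N%:R * (3 / 2) * sphere_defect t).
    by rewrite sumr_const card_ord -mulr_natl; field.
  rewrite mulr_sumr; apply: ler_sum => j _.
  case: eqP => _; first by rewrite mulr0 mulr_ge0 ?divr_ge0 ?mulr_ge0 ?ler0n.
  apply: mul_alignment_le.
  - by rewrite divr_ge0 ?ler0n // psi_ge0 // ltW.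
  - by rewrite ler_pM2r ?invr_gt0 ?ltr0n // psi_leM // ltW.
  - by case: eqP => _; rewrite ?normr1 ?ger0_norm; lra.
  - by have := sqr_ge0 (sqnorm i t - 1); lra.
  - by have := sphere_defect_term_le j t; have := sqr_ge0 (sqnorm j t - 1); lra.
have := sqr_ge0 (sqnorm i t - 1 - radial i t); nra.
Qed.

Lemma within_continuous_sphere_defect :
  {within [set t | 0 <= t], continuous sphere_defect}.
Proof.
apply: within_continuous_bigsum => i.
have ra := within_continuous_dot3 (@x_cont i) (@v_cont i).
have sn := within_continuous_dot3 (@x_cont i) (@x_cont i).
have sn1 : {within [set t | 0 <= t], continuous (fun s => sqnorm i s - 1)}.
  by move=> s; apply: cvgB; [exact: sn | exact: cvg_cst].
exact: within_continuousD (within_continuousM ra ra) (within_continuousM sn1 sn1).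
Qed.

Lemma sphere_defect0 : sphere_defect 0 = 0.
Proof.
apply: big1 => i _; rewrite /sqnorm /radial -norm3_sq x0_unit dot3C v0_tangent.
by rewrite expr1n subrr expr0n addr0.
Qed.

Lemma sphere_invariant t : 0 <= t -> forall i, sqnorm i t = 1 /\ radial i t = 0.
Proof.
move=> t0 i; have := sphere_defect_term_le i t.
rewrite (local_gronwall_eq0 _ within_continuous_sphere_defect sphere_defect0
  (fun t _ => sphere_defect_ge0 t) is_derive_sphere_defect sphere_defect'_le) //.
move=> G0; have := sqr_ge0 (radial i t); have := sqr_ge0 (sqnorm i t - 1).
move=> s1 s2; have /eqP : radial i t ^+ 2 = 0 by lra.
have /eqP : (sqnorm i t - 1) ^+ 2 = 0 by lra.
by rewrite !sqrf_eq0 subr_eq0 => /eqP -> /eqP ->.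
Qed.

Definition coupling i j t := if x j t == - x i t then 0 else psi i j t.
Definition mismatch i j t := Rot (x j t) (x i t) *m v j t - v i t.

Lemma couplingC i j t : 0 <= t -> coupling i j t = coupling j i t.
Proof. by move=> t0; rewrite /coupling psiC // -eqr_oppLR eq_sym. Qed.

Lemma dot3_v_rhs i t : 0 <= t -> dot3 (v i t) (rhs_v sigma psi x v i t) =
  N%:R^-1 * \sum_j coupling i j t * dot3 (v i t) (mismatch i j t)
  + sigma / N%:R * \sum_k dot3 (x k t) (v i t).
Proof.
move=> t0; have [n1 xv] := sphere_invariant t0 i.
have vx : dot3 (v i t) (x i t) = 0 by rewrite dot3C.
rewrite /rhs_v !dot3Dr dot3Nr dot3Zr !dot3_sumr vx mulr0 oppr0 add0r !mulr_sumr.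
congr (_ + _); apply: eq_bigr => j _.
  rewrite /align_term /coupling; case: eqP => _; first by rewrite dot30r mul0r mulr0.
  by rewrite dot3Zr /mismatch; ring.
by rewrite dot3Zr dot3Br !dot3Zr norm3_sq -/(sqnorm i t) n1 vx (dot3C (v i t)); ring.
Qed.

Lemma dissip_termE i j t : 0 <= t ->
  dissip_term (psi i j t / N%:R ^+ 2) (x j t) (x i t) (v j t) (v i t) =
  (N%:R ^+ 2)^-1 * (coupling i j t * (dot3 (v j t) (v j t) - dot3 (v i t) (v i t))
                    - 2 * (coupling i j t * dot3 (v i t) (mismatch i j t))).
Proof.
move=> t0; have [ni _] := sphere_invariant t0 i; have [nj _] := sphere_invariant t0 j.
rewrite /dissip_term /coupling; case: eqP => [_|/eqP xNx]; first by rewrite !mul0r mulr0 subrr mulr0.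
rewrite norm3_sq /mismatch !(dot3Bl, dot3Br) (Rot_isometry _ nj ni xNx).
by rewrite (dot3C (Rot _ _ *m _)); ring.
Qed.

Lemma energy_rateE t : 0 <= t -> energy_rate psi x v t =
  2 / N%:R ^+ 2 * \sum_i \sum_j coupling i j t * dot3 (v i t) (mismatch i j t).
Proof.
move=> t0; have sym := sum_sym_weighted_diff (fun j => dot3 (v j t) (v j t))
  (fun i j => couplingC i j t0).
transitivity (2 / N%:R ^+ 2 * \sum_i \sum_j coupling i j t * dot3 (v i t) (mismatch i j t)
  - (N%:R ^+ 2)^-1 * \sum_i \sum_j coupling i j t * (dot3 (v j t) (v j t) - dot3 (v i t) (v i t))).
  rewrite /energy_rate !mulr_sumr -sumrB -sumrN; apply: eq_bigr => i _.
  rewrite !mulr_sumr -sumrB -sumrN; apply: eq_bigr => j _.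
  by rewrite dissip_termE //; ring.
by rewrite sym mulr0 subr0.
Qed.

Lemma energyE : energy sigma x v = fun t =>
  N%:R^-1 * \sum_k dot3 (v k t) (v k t)
  + sigma / (2 * N%:R ^+ 2) * \sum_k \sum_l dot3 (x k t - x l t) (x k t - x l t).
Proof.
apply/funext => t; rewrite /energy; under eq_bigr do rewrite norm3_sq.
by under [X in _ + _ * X]eq_bigr do under eq_bigr do rewrite norm3_sq.
Qed.

Lemma is_derive_energy t : 0 < t -> is_derive t 1 (energy sigma x v) (energy_rate psi x v t).
Proof.
move=> t0; have t0' := ltW t0.
have dv k := is_derive_dot3 (fun m => v_deriv k m t0) (fun m => v_deriv k m t0).
have dx k l m : is_derive t 1 (fun s => (x k s - x l s) m 0) ((v k t - v l t) m 0).
  have -> : (fun s => (x k s - x l s) m 0) = (fun s => x k s m 0 - x l s m 0).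
    by apply/funext => s; rewrite !mxE.
  by rewrite !mxE; exact: is_deriveB (x_deriv k m t0) (x_deriv l m t0).
have dxx k l := is_derive_dot3 (dx k l) (dx k l).
rewrite energyE; apply: is_derive_eq.
  exact: is_deriveD (is_deriveZ _ (is_derive_bigsum dv))
    (is_deriveZ _ (is_derive_bigsum (fun k => is_derive_bigsum (dxx k)))).
set A := \sum_i \sum_j coupling i j t * dot3 (v i t) (mismatch i j t).
set B := \sum_i \sum_k dot3 (x k t) (v i t).
have kinetic : \sum_k (dot3 (rhs_v sigma psi x v k t) (v k t) + dot3 (v k t) (rhs_v sigma psi x v k t))
    = 2 * (N%:R^-1 * A + sigma / N%:R * B).
  rewrite /A /B !mulr_sumr -big_split mulr_sumr; apply: eq_bigr => i _.
  by rewrite /= dot3C dot3_v_rhs //; ring.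
have potential : \sum_k \sum_l (dot3 (v k t - v l t) (x k t - x l t)
    + dot3 (x k t - x l t) (v k t - v l t)) = - 4 * B.
  transitivity (2 * \sum_k \sum_l dot3 (x k t - x l t) (v k t - v l t)).
    rewrite mulr_sumr; apply: eq_bigr => k _; rewrite mulr_sumr; apply: eq_bigr => l _.
    by rewrite dot3C; ring.
  rewrite sum_dot3_pairwise_diff big1 => [|k _]; last by have [] := sphere_invariant t0' k.
  by rewrite /B exchange_big /=; ring.
have scaleE (a b : R) : a *: b = a * b by [].
rewrite /= !scaleE kinetic potential energy_rateE // -/A.
by field.
Qed.

Lemma within_continuous_energy : {within [set t | 0 <= t], continuous (energy sigma x v)}.
Proof.
have dx k l m : {within [set t | 0 <= t], continuous (fun s => (x k s - x l s) m 0)}.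
  have -> : (fun s => (x k s - x l s) m 0) = (fun s => x k s m 0 - x l s m 0).
    by apply/funext => s; rewrite !mxE.
  exact: within_continuousB (@x_cont k m) (@x_cont l m).
have kin : {within [set t | 0 <= t], continuous (fun s => \sum_k dot3 (v k s) (v k s))}.
  by apply: within_continuous_bigsum => k; exact: within_continuous_dot3.
have pot : {within [set t | 0 <= t],
    continuous (fun s => \sum_k \sum_l dot3 (x k s - x l s) (x k s - x l s))}.
  by do 2 apply: within_continuous_bigsum => ?; exact: within_continuous_dot3.
by rewrite energyE => t; apply: cvgD; apply: cvgM; (exact: cvg_cst || exact: kin || exact: pot).
Qed.

Lemma energy_rate_le0 t : 0 <= t -> energy_rate psi x v t <= 0.
Proof.
move=> t0; rewrite oppr_le0; apply: sumr_ge0 => i _; apply: sumr_ge0 => j _.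
rewrite /dissip_term; case: ifP => _ //.
by rewrite mulr_ge0 ?sqr_ge0 ?divr_ge0 ?exprn_ge0 ?ler0n ?psi_ge0.
Qed.

Lemma energy_le_energy0 t : 0 <= t -> energy sigma x v t <= energy sigma x v 0.
Proof.
move=> t0; apply: (is_derive_le0_le t0 _ (fun s _ => is_derive_energy _)) => [|s|s].
- apply: continuous_subspaceW within_continuous_energy => s.
  by rewrite /= in_itv /= => /andP[].
- by rewrite in_itv /= => /andP[].
- by rewrite in_itv /= => /andP[s0 _]; exact/energy_rate_le0/ltW.
Qed.

Hypothesis sigma_ge0 : 0 <= sigma.

Lemma kinetic_le_energy t : \sum_k dot3 (v k t) (v k t) <= N%:R * energy sigma x v t.
Proof.
rewrite energyE /= mulrDr [N%:R * (N%:R^-1 * _)]mulrA mulfV // mul1r lerDl mulr_ge0 ?ler0n //.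
rewrite mulr_ge0 ?divr_ge0 ?mulr_ge0 ?exprn_ge0 ?ler0n //.
by apply: sumr_ge0 => k _; apply: sumr_ge0 => l _; exact: dot3_ge0.
Qed.

Lemma Vmax_le t : 0 <= t -> Vmax v t <= Num.sqrt (N%:R * energy sigma x v 0).
Proof.
move=> t0; apply: bigmax_le => [|i _]; first exact: sqrtr_ge0.
have kin := le_trans (kinetic_le_energy t) (ler_wpM2l (ler0n _ N) (energy_le_energy0 t0)).
have vi : dot3 (v i t) (v i t) <= \sum_k dot3 (v k t) (v k t).
  by rewrite (bigD1 i) //= lerDl sumr_ge0 // => k _; exact: dot3_ge0.
by rewrite /norm3 ler_sqrt ?(le_trans vi kin) // (le_trans (dot3_ge0 _) (le_trans vi kin)).
Qed.

End Solution.

Unset Implicit Arguments.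

Theorem proposition3p3 (R : realType) (N : nat) (sigma : R)
    (psi : 'I_N -> 'I_N -> R -> R) (x v : 'I_N -> R -> 'cV[R]_3) :
  (0 < N)%N ->
  0 <= sigma ->
  (forall i j t, 0 <= t -> 0 <= psi i j t) ->
  (exists M : R, forall i j t, 0 <= t -> psi i j t <= M) ->
  (forall i j t, 0 <= t -> psi i j t = psi j i t) ->
  (* continuity of the solution on [0, +oo) *)
  (forall i (k : 'I_3), {within [set t : R | 0 <= t], continuous (fun s => x i s k 0)}) ->
  (forall i (k : 'I_3), {within [set t : R | 0 <= t], continuous (fun s => v i s k 0)}) ->
  (* the ODE system for t > 0 *)
  (forall (i : 'I_N) (k : 'I_3) (t : R), 0 < t -> is_derive t 1 (fun s => x i s k 0) (v i t k 0)) ->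
  (forall (i : 'I_N) (k : 'I_3) (t : R), 0 < t ->
     is_derive t 1 (fun s => v i s k 0) (rhs_v sigma psi x v i t k 0)) ->
  (* initial data *)
  (forall i, norm3 (x i 0) = 1) ->
  (forall i, dot3 (v i 0) (x i 0) = 0) ->
  (forall t : R, 0 < t -> is_derive t 1 (energy sigma x v) (energy_rate psi x v t)) /\
  (forall t : R, 0 <= t -> Vmax v t <= Num.sqrt (N%:R * energy sigma x v 0)).
Proof.
move=> N_gt0 sigma_ge0 psi_ge0 [M psi_leM] psiC x_cont v_cont x_deriv v_deriv x0_unit v0_tangent.
split => t t0.
- exact: (is_derive_energy N_gt0 psi_ge0 psi_leM psiC x_cont v_cont x_deriv v_deriv x0_unit v0_tangent t0).
- exact: (Vmax_le N_gt0 psi_ge0 psi_leM psiC x_cont v_cont x_deriv v_deriv x0_unit v0_tangent sigma_ge0 t0).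
Qed.
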